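(* Let $G=(V,E,w)$, $s$, $\tau$ (with $|\tau|\ge 2$) and a budget $b\ge 0$ be as in the context, and suppose that at least one feasible subgraph exists. Then among the maximizers of $\textsc{CD}_{\tau,s}(S)$ over all feasible subgraphs $S\subseteq G$, there is at least one that is a directed acyclic graph.
   Context: Let $G=(V,E,w)$ be a finite directed graph with non-negative edge weights $w:E\to\mathbb{R}_{\ge 0}$. A path from $u$ to $v$ in a subgraph $S\subseteq G$ is a sequence $u=v_0\to v_1\to\cdots\to v_k=v$ ($k\ge 0$) with each $v_i\to v_{i+1}$ an edge of $S$; for $i\le j$, $w_P(v_i,v_j)=\sum_{m=i}^{j-1} w(v_m\to v_{m+1})$. A vertex $y$ is reachable from $x$ in $S$ if there is a path from $x$ to $y$ in $S$ (a vertex is reachable from itself). Fix a start vertex $s\in V$ and a finite target set $\tau\subseteq V\setminus\{s\}$ with $|\tau|\ge 2$. The cost of a subgraph $S$ is $w(S)=\sum_{e\in E(S)} w(e)$. For a subgraph $S$ containing $s$ and $\tau$ in which every target is reachable from $s$: for a path $P=v_0\to\cdots\to v_k$ in $S$ with $v_0=s$, $v_k=t\in\tau$, let $\ell$ be the largest index such that some target in $\tau\setminus\{t\}$ is reachable from $v_\ell$ in $S$; the last deceptive point is $l(P,t)=v_\ell$. The unique distance of $t\in\tau$ is $\textsc{U}_S(t)=\min\{w_P(l(P,t),t): P \text{ a path in } S \text{ from } s \text{ to } t\}$, and the counterdeceptiveness of $S$ is $\textsc{CD}_{\tau,s}(S)=\min_{t\in\tau}\textsc{U}_S(t)$. Given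 a budget $b\ge 0$, a subgraph $S\subseteq G$ is feasible if $s\in V(S)$, $\tau\subseteq V(S)$, every target is reachable from $s$ in $S$, and $w(S)\le b$. A maximizer is a feasible $S$ maximizing $\textsc{CD}_{\tau,s}(S)$ among feasible subgraphs. *)

From HB Require Import structures.
From mathcomp Require Import all_boot all_order all_algebra.
From mathcomp Require Import boolp classical_sets reals.
Set Implicit Arguments. Unset Strict Implicit. Unset Printing Implicit Defensive.
Import Order.TTheory GRing.Theory Num.Theory.
Local Open Scope ring_scope.
Local Open Scope classical_set_scope.

(* A directed graph G = (V, E, w): V a finite type, E : {set V * V} the edge
   relation, w : V * V -> R the weight (nonnegativity on E is a hypothesis). *)
Definition subgraph (V : finType) := ({set V} * {set V * V})%type.

Section Defs.
Variables (R : realType) (V : finType).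
Implicit Types (S : subgraph V).

Definition is_subgraph (E : {set V * V}) S :=
  S.2 \subset E /\ forall e, e \in S.2 -> e.1 \in S.1 /\ e.2 \in S.1.

Definition edgeS S : rel V := fun x y => (x, y) \in S.2.

Definition walk S (x : V) (p : seq V) : Prop := x \in S.1 /\ path (edgeS S) x p.

Definition reachable S (x y : V) : Prop :=
  exists p : seq V, walk S x p /\ last x p = y.

Definition cost (w : V * V -> R) S : R := \sum_(e in S.2) w e.

(* w_P(v_i, v_k) for the path P = x :: p, k = size p *)
Definition suffix_weight (w : V * V -> R) (x : V) (p : seq V) (i : nat) : R :=
  \sum_(i <= m < size p) w (nth x (x :: p) m, nth x (x :: p) m.+1).

Definition deceptive (tau : {set V}) S (t v : V) : Prop :=
  exists t', [/\ t' \in tau, t' != t & reachable S v t'].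

Definition is_ldp_index (tau : {set V}) S (t x : V) (p : seq V) (i : nat) : Prop :=
  [/\ (i <= size p)%N, deceptive tau S t (nth x (x :: p) i)
    & forall j, (i < j <= size p)%N -> ~ deceptive tau S t (nth x (x :: p) j)].

(* unique distance U_S(t): minimum (taken as infimum) over paths P from s to t
   of w_P(l(P,t), t) *)
Definition unique_dist (w : V * V -> R) (tau : {set V}) (s : V) S (t : V) : R :=
  inf [set u : R | exists p : seq V, exists i : nat,
         [/\ walk S s p, last s p = t, is_ldp_index tau S t s p i
           & u = suffix_weight w s p i]].

Definition CD (w : V * V -> R) (tau : {set V}) (s : V) S : R :=
  inf [set u : R | exists2 t, t \in tau & u = unique_dist w tau s S t].

Definition feasible (E : {set V * V}) (w : V * V -> R) (tau : {set V}) (s : V)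
    (b : R) S : Prop :=
  [/\ is_subgraph E S, s \in S.1, tau \subset S.1,
      (forall t, t \in tau -> reachable S s t) & cost w S <= b].

Definition acyclic S : Prop :=
  forall (x : V) (p : seq V), walk S x p -> p != [::] -> last x p != x.

End Defs.

From HB Require Import structures.
From mathcomp Require Import all_boot all_order all_algebra.
From mathcomp Require Import boolp classical_sets reals.
Import Order.TTheory GRing.Theory Num.Theory.
Local Open Scope ring_scope.
Local Open Scope classical_set_scope.

(* Deleting edges can only increase counterdeceptiveness: a path of the smaller
   graph is a path of the larger one, where more vertices are deceptive, so its
   last deceptive point comes later and the remaining suffix weighs less.  Hence
   any maximizer M can be thinned to the "layered" subgraph keeping only the
   edges that strictly increase the distance from s; this subgraph is acyclic,
   keeps every vertex reachable, costs no more, and is therefore again a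
   maximizer. *)

Set Implicit Arguments.
Unset Strict Implicit.

Lemma ex_last_index (P : nat -> Prop) n i : (i <= n)%N -> P i ->
  exists j, [/\ (i <= j <= n)%N, P j & forall k, (j < k <= n)%N -> ~ P k].
Proof.
move=> le_in Pi; pose Q k := `[< (i <= k <= n)%N /\ P k >].
have exQ : exists k, Q k by exists i; apply/asboolP; rewrite leqnn le_in.
have ubQ k : Q k -> (k <= n)%N by move=> /asboolP[/andP[]].
case: (ex_maxnP exQ ubQ) => j /asboolP[ijn Pj] maxj; exists j; split=> //.
move=> k /andP[lt_jk le_kn] Pk.
have /andP[le_ij _] := ijn.
have : (k <= j)%N.
  by apply: maxj; apply/asboolP; rewrite le_kn (leq_trans le_ij (ltnW lt_jk)).
by rewrite leqNgt lt_jk.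
Qed.

Section Subgraphs.
Variable V : finType.
Implicit Types (S : subgraph V).

Lemma walk_subgraph S S' x p : S'.1 \subset S.1 -> S'.2 \subset S.2 ->
  walk S' x p -> walk S x p.
Proof.
move=> sub1 sub2 [Sx Sp]; split; first exact: (fintype.subsetP sub1).
by apply: sub_path Sp => y z; apply: (fintype.subsetP sub2).
Qed.

Lemma reachable_subgraph S S' x y : S'.1 \subset S.1 -> S'.2 \subset S.2 ->
  reachable S' x y -> reachable S x y.
Proof. by move=> sub1 sub2 [p [Wp <-]]; exists p; split=> //; apply: walk_subgraph Wp. Qed.

Lemma deceptive_subgraph tau S S' t v : S'.1 \subset S.1 -> S'.2 \subset S.2 ->
  deceptive tau S' t v -> deceptive tau S t v.
Proof. by move=> sub1 sub2 [t' [? ? r]]; exists t'; split=> //; apply: reachable_subgraph r. Qed.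

Lemma walk_edge S x p m : walk S x p -> (m < size p)%N ->
  (nth x (x :: p) m, nth x (x :: p) m.+1) \in S.2.
Proof. by move=> [_ /(pathP x)]; apply. Qed.

End Subgraphs.

Section SuffixWeight.
Variables (R : realType) (V : finType) (E : {set V * V}) (w : V * V -> R).
Hypothesis w_ge0 : forall e, e \in E -> 0 <= w e.
Variables (S : subgraph V) (x : V) (p : seq V).
Hypotheses (SE : is_subgraph E S) (Wp : walk S x p).

Let step_ge0 m : (m < size p)%N -> 0 <= w (nth x (x :: p) m, nth x (x :: p) m.+1).
Proof. by move=> lt_mp; apply/w_ge0/(fintype.subsetP SE.1)/walk_edge. Qed.

Let sum_steps_ge0 i j : (j <= size p)%N ->
  0 <= \sum_(i <= m < j) w (nth x (x :: p) m, nth x (x :: p) m.+1).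
Proof.
move=> le_jp; rewrite big_nat_cond; apply: sumr_ge0 => m /andP[/andP[_ lt_mj] _].
exact/step_ge0/(leq_trans lt_mj).
Qed.

Lemma suffix_weight_ge0 i : 0 <= suffix_weight w x p i.
Proof. exact: sum_steps_ge0. Qed.

Lemma suffix_weight_antimono i j : (j <= i)%N ->
  suffix_weight w x p i <= suffix_weight w x p j.
Proof.
move=> le_ji; have [le_ip|lt_pi] := leqP i (size p).
  by rewrite /suffix_weight (big_cat_nat le_ji le_ip) /= lerDr sum_steps_ge0.
by rewrite /suffix_weight big_geq ?(ltnW lt_pi) // suffix_weight_ge0.
Qed.

End SuffixWeight.

Section UniqueDistance.
Variables (R : realType) (V : finType) (E : {set V * V}) (w : V * V -> R).
Hypothesis w_ge0 : forall e, e \in E -> 0 <= w e.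
Variables (tau : {set V}) (s : V).
Hypothesis tau_ge2 : (2 <= #|tau|)%N.
Implicit Types (S : subgraph V).

Definition unique_dist_set S t : set R :=
  [set u | exists p : seq V, exists i : nat,
     [/\ walk S s p, last s p = t, is_ldp_index tau S t s p i
       & u = suffix_weight w s p i]].

Definition targets_reachable S := forall t, t \in tau -> reachable S s t.

Lemma ex_ldp_index_ge S t p i : (i <= size p)%N ->
  deceptive tau S t (nth s (s :: p) i) ->
  exists2 j, (i <= j)%N & is_ldp_index tau S t s p j.
Proof.
move=> le_ip Di.
have [j [/andP[le_ij le_jp] Dj maxj]] :=
  @ex_last_index (fun k => deceptive tau S t (nth s (s :: p) k)) _ _ le_ip Di.
by exists j.
Qed.

Lemma ex_other_target t : t \in tau -> exists2 t', t' \in tau & t' != t.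
Proof.
move=> tau_t; have : (0 < #|tau :\ t|)%N.
  by move: tau_ge2; rewrite (cardsD1 t) tau_t add1n ltnS.
by case/card_gt0P => t' /setD1P[t'_neq_t tau_t']; exists t'.
Qed.

Lemma unique_dist_set_neq0 S t : targets_reachable S -> t \in tau ->
  unique_dist_set S t !=set0.
Proof.
move=> reachS tau_t; have [p [Wp last_p]] := reachS t tau_t.
have [t' tau_t' t'_neq_t] := ex_other_target tau_t.
have D0 : deceptive tau S t (nth s (s :: p) 0) by exists t'; split=> //; apply: reachS.
have [i _ ldp_i] := ex_ldp_index_ge (leq0n _) D0.
by exists (suffix_weight w s p i), p, i.
Qed.

Lemma unique_dist_set_ge0 S t : is_subgraph E S -> lbound (unique_dist_set S t) 0.
Proof. by move=> SE u [p [i [Wp _ _ ->]]]; exact: (suffix_weight_ge0 w_ge0 SE Wp). Qed.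

Lemma unique_dist_ge0 S t : is_subgraph E S -> targets_reachable S -> t \in tau ->
  0 <= unique_dist w tau s S t.
Proof.
by move=> SE reachS tau_t; apply: lb_le_inf (unique_dist_set_neq0 reachS tau_t) _;
  apply: unique_dist_set_ge0.
Qed.

Section Antimonotone.
Variables (S S' : subgraph V).
Hypotheses (sub1 : S'.1 \subset S.1) (sub2 : S'.2 \subset S.2).
Hypotheses (SE : is_subgraph E S) (reachS' : targets_reachable S').

Lemma unique_dist_antimono t : t \in tau ->
  unique_dist w tau s S t <= unique_dist w tau s S' t.
Proof.
move=> tau_t; apply: lb_le_inf (unique_dist_set_neq0 reachS' tau_t) _.
move=> _ [p [i' [W'p last_p [le_i'p D'i' _] ->]]].
have Wp := walk_subgraph sub1 sub2 W'p.
have [i le_i'i ldp_i] := ex_ldp_index_ge le_i'p (deceptive_subgraph sub1 sub2 D'i').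
apply: (@le_trans _ _ (suffix_weight w s p i)).
  by apply: ge_inf; [exists 0; apply: unique_dist_set_ge0 | exists p, i].
exact: (suffix_weight_antimono w_ge0 SE Wp).
Qed.

Lemma CD_antimono : targets_reachable S -> CD w tau s S <= CD w tau s S'.
Proof.
move=> reachS.
have [t0 tau_t0] : exists t, t \in tau by apply/card_gt0P/(leq_trans _ tau_ge2).
apply: lb_le_inf; first by exists (unique_dist w tau s S' t0), t0.
move=> _ [t tau_t ->]; apply: le_trans (unique_dist_antimono tau_t).
apply: ge_inf; last by exists t.
by exists 0 => _ [t1 tau_t1 ->]; apply: unique_dist_ge0.
Qed.

End Antimonotone.
End UniqueDistance.

Section Layering.
Variables (V : finType) (s : V).
Implicit Types (S : subgraph V) (d : V -> nat).

Definition shortest_walk_dist S d := forall v, reachable S s v ->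
  (exists p, [/\ walk S s p, last s p = v & size p = d v]) /\
  (forall p, walk S s p -> last s p = v -> (d v <= size p)%N).

Lemma ex_shortest_walk_dist S : exists d, shortest_walk_dist S d.
Proof.
suff /choice[d dP] : forall v, exists n, reachable S s v ->
    (exists p, [/\ walk S s p, last s p = v & size p = n]) /\
    (forall p, walk S s p -> last s p = v -> (n <= size p)%N) by exists d.
move=> v; have [[p [Wp last_p]]|] := EM (reachable S s v); last by exists 0%N.
pose P n := `[< exists p, [/\ walk S s p, last s p = v & size p = n] >].
have exP : exists n, P n by exists (size p); apply/asboolP; exists p.
case: (ex_minnP exP) => n /asboolP Pn minn; exists n => _; split=> // q Wq last_q.
by apply: minn; apply/asboolP; exists q.
Qed.

Definition layered S d : subgraph V := (S.1, [set e in S.2 | (d e.1 < d e.2)%N]).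

Lemma layered_subset S d : (layered S d).2 \subset S.2.
Proof. by apply/fintype.subsetP => e; rewrite inE => /andP[]. Qed.

Lemma path_layered_le S d x p : path (edgeS (layered S d)) x p -> (d x <= d (last x p))%N.
Proof.
elim: p x => [|y p IHp] x //= /andP[]; rewrite /edgeS inE => /andP[_ lt_xy] Pp.
exact: leq_trans (ltnW lt_xy) (IHp _ Pp).
Qed.

Lemma layered_acyclic S d : acyclic (layered S d).
Proof.
move=> x [//|y p] [_ /= /andP[]]; rewrite /edgeS inE => /andP[_ lt_xy] Pp _.
by apply/eqP => last_x; move: (leq_trans lt_xy (path_layered_le Pp)); rewrite last_x ltnn.
Qed.

Lemma layered_reachable S d : shortest_walk_dist S d ->
  forall v, reachable S s v -> reachable (layered S d) s v.
Proof.
move=> dP v; move: {2}(d v) (erefl (d v)) => n; elim: n v => [|n IHn] v dv reach_v.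
  have [[p [[Ss _] last_p]]] := dP v reach_v; rewrite dv => /size0nil p0 _.
  by exists [::]; rewrite -last_p p0.
have [[p [Wp last_p size_p]] minp] := dP v reach_v.
case/lastP: p Wp last_p size_p => [|q v'] Wp; first by rewrite dv.
rewrite last_rcons size_rcons dv => last_v [size_q]; subst v'.
case: Wp => Ss; rewrite rcons_path => /andP[Pq Euv]; set u := last s q in Euv.
have reach_u : reachable S s u by exists q.
have [[r [Wr last_r size_r]] minu] := dP u reach_u.
have du : d u = n.
  have Wrv : walk S s (rcons r v) by split; rewrite // rcons_path Wr.2 last_r.
  have := minp _ Wrv; rewrite last_rcons size_rcons size_r dv ltnS => /(_ erefl).
  by rewrite -size_q => le_qu; apply/eqP; rewrite eqn_leq le_qu minu.
have [r' [[_ Pr'] last_r']] := IHn u du reach_u.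
exists (rcons r' v); split; last by rewrite last_rcons.
split=> //; rewrite rcons_path Pr' last_r' /edgeS inE /= du dv ltnSn andbT.
exact: Euv.
Qed.

End Layering.

Section Thinning.
Variables (R : realType) (V : finType) (E : {set V * V}) (w : V * V -> R).
Hypothesis w_ge0 : forall e, e \in E -> 0 <= w e.
Variables (tau : {set V}) (s : V) (b : R) (S S' : subgraph V).
Hypotheses (eq1 : S'.1 = S.1) (sub2 : S'.2 \subset S.2).

Lemma cost_subset : S.2 \subset E -> cost w S' <= cost w S.
Proof.
move=> SE; rewrite /cost (big_setID S'.2 (A := S.2)) /= (finset.setIidPr sub2) lerDl.
by apply: sumr_ge0 => e /finset.setDP[S_e _]; apply/w_ge0/(fintype.subsetP SE).
Qed.

Lemma feasible_thinning : feasible E w tau s b S -> targets_reachable tau s S' ->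
  feasible E w tau s b S'.
Proof.
move=> [[SE S_ends] S_s tau_S _ costS] reachS'; split; rewrite ?eq1 //.
- split; first exact: fintype.subset_trans sub2 SE.
  by move=> e /(fintype.subsetP sub2); rewrite eq1; apply: S_ends.
- exact: le_trans (cost_subset SE) costS.
Qed.

End Thinning.

Theorem lemma1 (R : realType) (V : finType) (E : {set V * V}) (w : V * V -> R)
    (s : V) (tau : {set V}) (b : R)
    (hw : forall e, e \in E -> 0 <= w e)
    (hs : s \notin tau) (htau : (2 <= #|tau|)%N) (hb : 0 <= b)
    (hfeas : exists S : subgraph V, feasible E w tau s b S) :
  exists S : subgraph V,
    [/\ feasible E w tau s b S,
        (forall S' : subgraph V, feasible E w tau s b S' ->
           CD w tau s S' <= CD w tau s S)
      & acyclic S].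
Proof.
have [S0 feasS0] := hfeas.
pose isfeas S := `[< feasible E w tau s b S >].
have [M /asboolP feasM maxM] := arg_maxP (CD w tau s) (asboolT feasS0 : isfeas S0).
have [subgM _ _ reachM _] := feasM.
have [d distM] := ex_shortest_walk_dist s M.
have reachM' : targets_reachable tau s (layered M d).
  by move=> t tau_t; apply: (layered_reachable distM); apply: reachM.
have feasM' := feasible_thinning (S := M) (S' := layered M d) hw erefl
  (layered_subset M d) feasM reachM'.
exists (layered M d); split=> [//|S' feasS'|]; last exact: layered_acyclic.
apply: le_trans (maxM S' (asboolT feasS')) _.
exact: (CD_antimono (S := M) (S' := layered M d) hw htau (fintype.subxx _)
  (layered_subset M d) subgM reachM' reachM).
Qed.
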